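(* Fix $\lambda_t \in \mathbb{R}^m_+$. For each deterministic policy $\pi \in \Pi$ define $\mathcal{T}^\pi:\mathbb{R}^{\mathcal{S}}\to\mathbb{R}^{\mathcal{S}}$ by $$[\mathcal{T}^{\pi} v](s) = (r - \lambda_t^{\top}g)(s, \pi(s)) + \gamma \langle P^o_{s, \pi(s)}, v \rangle + \gamma \min_{P \in \mathcal{P}} \langle P_{s, \pi(s)} - P^o_{s, \pi(s)}, V^{\pi}_{r} \rangle - \gamma \lambda_t^{\top} \min_{P \in \mathcal{P}} \langle P_{s, \pi(s)} - P^o_{s, \pi(s)}, V^{\pi}_{g} \rangle,$$ where $(r-\lambda_t^\top g)(s,a) = r(s,a) - \lambda_t^\top g(s,a)$ and the second minimum is taken componentwise over $g_1,\dots,g_m$, and define $[\mathcal{T}^* v](s) = \max_{\pi \in \Pi}[\mathcal{T}^\pi v](s)$. Then: (1) (Monotonicity) if $v_1,v_2 \in \mathbb{R}^{\mathcal{S}}$ with $v_1 \ge v_2$ componentwise, then $\mathcal{T}^\pi v_1 \ge \mathcal{T}^\pi v_2$ and $\mathcal{T}^* v_1 \ge \mathcal{T}^* v_2$; (2) (Transition invariance) for every $c\in\mathbb{R}$, $\mathcal{T}^\pi(v + c\mathbf{1}) = \mathcal{T}^\pi v + \gamma c\mathbf{1}$ and $\mathcal{T}^*(v + c\mathbf{1}) = \mathcal{T}^* v + \gamma c\mathbf{1}$; (3) (Contraction) $\mathcal{T}^\pi$ and $\mathcal{T}^*$ are $\gamma$-contractions in $\|\cdot\|_\infty$, and $V^\pi_r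 - \lambda_t^\top V^\pi_g$ is the unique fixed point of $\mathcal{T}^\pi$.
   Context: $\mathcal{S},\mathcal{A}$ are finite, $\gamma\in[0,1)$. $P^o = (P^o_{s,a})$ is a nominal kernel, and $\mathcal{P} = \otimes_{(s,a)}\mathcal{P}_{s,a}$ is an $(s,a)$-rectangular uncertainty set with $\mathcal{P}_{s,a} = \{P\in\Delta(\mathcal{S}) : D(P,P^o_{s,a})\le\beta_{s,a}\}$ for a function $D$ and levels $\beta_{s,a}$ (minima over these sets taken to be attained); $\min_{P\in\mathcal{P}}\langle P_{s,a}, w\rangle$ means $\min_{P_{s,a}\in\mathcal{P}_{s,a}}\langle P_{s,a},w\rangle$. $r:\mathcal{S}\times\mathcal{A}\to[0,\bar R]$ is a reward, $g=(g_1,\dots,g_m)$ with $g_i:\mathcal{S}\times\mathcal{A}\to[0,\tau_i]$ are constraint rewards. $\Pi$ is the set of deterministic stationary policies $\pi:\mathcal{S}\to\mathcal{A}$. For a reward $u$, $V^\pi_u(s) = \min_{\mathcal{K}\in\otimes_{t\ge0}\mathcal{P}}\mathbb{E}_{\mathcal{K}}[\sum_{t\ge0}\gamma^t u(s_t,a_t)\mid s_0=s,\pi]$ is the robust value function (worst case over sequences of kernels from $\mathcal{P}$, one per time step); $V^\pi_g = (V^\pi_{g_1},\dots,V^\pi_{g_m})^\top$. In the definition of $\mathcal{T}^\pi$, $V^\pi_r$ and $V^\pi_g$ are fixed (they depend on $\pi$, not on $v$). *)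

From HB Require Import structures.
From mathcomp Require Import all_boot all_order all_algebra.
From mathcomp Require Import all_classical all_reals all_analysis.
Set Implicit Arguments. Unset Strict Implicit. Unset Printing Implicit Defensive.
Import Order.TTheory GRing.Theory Num.Theory.
Local Open Scope classical_set_scope.
Local Open Scope ring_scope.

(* A transition kernel: P s a s' = probability of s' after (s,a). *)
Definition tkernel (R : realType) (S A : finType) := S -> A -> S -> R.

Definition ip (R : realType) (S : finType) (p w : S -> R) : R :=
  \sum_(s' : S) p s' * w s'.

Definition is_dist (R : realType) (S : finType) (p : S -> R) : Prop :=
  (forall s', 0 <= p s') /\ \sum_(s' : S) p s' = 1.

Definition Pset (R : realType) (S A : finType) (Po : tkernel R S A)
  (D : (S -> R) -> (S -> R) -> R) (beta : S -> A -> R) (s : S) (a : A)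
  : set (S -> R) :=
  [set P | is_dist P /\ D P (Po s a) <= beta s a].

Definition in_unc (R : realType) (S A : finType) (Po : tkernel R S A)
  (D : (S -> R) -> (S -> R) -> R) (beta : S -> A -> R) (P : tkernel R S A) : Prop :=
  forall s a, Pset Po D beta s a (P s a).

(* state distribution at time t, starting at s0, following the deterministic
   policy pi, the transition at time t being drawn from the kernel K t *)
Fixpoint sdist (R : realType) (S A : finType) (K : nat -> tkernel R S A)
  (pi : S -> A) (s0 : S) (t : nat) : S -> R :=
  match t with
  | 0 => fun s => if s == s0 then 1 else 0
  | t'.+1 => fun s' => \sum_(s : S) sdist K pi s0 t' s * K t' s (pi s) s'
  end.

Definition disc_return (R : realType) (S A : finType) (gamma : R)
  (K : nat -> tkernel R S A) (pi : S -> A) (u : S -> A -> R) (s0 : S) : R :=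
  limn (fun n => \sum_(0 <= t < n)
          gamma ^+ t * \sum_(s : S) sdist K pi s0 t s * u s (pi s)).

(* robust value function: worst case over sequences of kernels in the
   uncertainty set, one per time step *)
Definition robust_value (R : realType) (S A : finType) (gamma : R)
  (Po : tkernel R S A) (D : (S -> R) -> (S -> R) -> R) (beta : S -> A -> R)
  (pi : S -> A) (u : S -> A -> R) (s0 : S) : R :=
  inf [set disc_return gamma K pi u s0 | K in
         [set K : nat -> tkernel R S A | forall t, in_unc Po D beta (K t)]].

Definition rmin (R : realType) (S A : finType) (Po : tkernel R S A)
  (D : (S -> R) -> (S -> R) -> R) (beta : S -> A -> R) (s : S) (a : A)
  (w : S -> R) : R :=
  inf [set ip (fun s' => P s' - Po s a s') w | P in Pset Po D beta s a].

Definition Tpi (R : realType) (S A : finType) (m : nat) (gamma : R)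
  (Po : tkernel R S A) (D : (S -> R) -> (S -> R) -> R) (beta : S -> A -> R)
  (r : S -> A -> R) (g : 'I_m -> S -> A -> R) (lam : 'I_m -> R)
  (pi : S -> A) (v : S -> R) : S -> R :=
  fun s =>
    (r s (pi s) - \sum_(i < m) lam i * g i s (pi s))
    + gamma * ip (Po s (pi s)) v
    + gamma * rmin Po D beta s (pi s) (robust_value gamma Po D beta pi r)
    - gamma * \sum_(i < m)
        lam i * rmin Po D beta s (pi s) (robust_value gamma Po D beta pi (g i)).

Definition Tstar (R : realType) (S A : finType) (m : nat) (gamma : R)
  (Po : tkernel R S A) (D : (S -> R) -> (S -> R) -> R) (beta : S -> A -> R)
  (r : S -> A -> R) (g : 'I_m -> S -> A -> R) (lam : 'I_m -> R)
  (v : S -> R) : S -> R :=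
  fun s => sup [set Tpi gamma Po D beta r g lam pi v s | pi in
                 [set: {ffun S -> A}]].

Definition supnorm (R : realType) (S : finType) (v : S -> R) : R :=
  \big[Num.max/0]_(s : S) `|v s|.

(* T^pi v = b + gamma * P^o_pi v is affine in v with a stochastic linear part,
   which gives monotonicity, translation and contraction; T^* is a pointwise
   maximum over the finitely many deterministic policies, which preserves all
   three.  For the fixed point, the robust value V_u of a bounded nonnegative
   reward u solves the robust Bellman equation V_u = u_pi + gamma min_P <P, V_u>:
   the n-step robust iterates sandwich V_u within gamma^n * sup u / (1 - gamma),
   from below by telescoping along any admissible kernel sequence, from above
   because a sequence of worst-case kernels attains the iterate.  Substituting
   these equations into T^pi, the nominal terms <P^o, V> cancel, and uniqueness
   follows from the contraction. *)

From HB Require Import structures.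
From mathcomp Require Import all_boot all_order all_algebra.
From mathcomp Require Import all_classical all_reals all_analysis.
From mathcomp Require Import ring lra.
Import Order.TTheory GRing.Theory Num.Theory numFieldNormedType.Exports.

Set Implicit Arguments.
Unset Strict Implicit.
Unset Printing Implicit Defensive.

Local Open Scope classical_set_scope.
Local Open Scope ring_scope.

Section InnerProduct.
Variables (R : realType) (S : finType).
Implicit Types (p q v w : S -> R).

Lemma ipD p v w : ip p (fun s => v s + w s) = ip p v + ip p w.
Proof. by rewrite /ip -big_split; apply: eq_bigr => s _; rewrite mulrDr. Qed.

Lemma ipB p v w : ip p (fun s => v s - w s) = ip p v - ip p w.
Proof. by rewrite /ip -sumrB; apply: eq_bigr => s _; rewrite mulrBr. Qed.

Lemma ipZ p c v : ip p (fun s => c * v s) = c * ip p v.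
Proof. by rewrite /ip mulr_sumr; apply: eq_bigr => s _; rewrite mulrCA. Qed.

Lemma ip0 p : ip p (fun _ => 0) = 0.
Proof. by rewrite /ip big1 // => s _; rewrite mulr0. Qed.

Lemma ip_sum m p (c : 'I_m -> R) (f : 'I_m -> S -> R) :
  ip p (fun s => \sum_(i < m) c i * f i s) = \sum_(i < m) c i * ip p (f i).
Proof.
rewrite /ip; under eq_bigr do rewrite mulr_sumr.
by rewrite exchange_big; apply: eq_bigr => i _; rewrite -ipZ.
Qed.

Lemma ipBl p q w : ip (fun s => p s - q s) w = ip p w - ip q w.
Proof. by rewrite /ip -sumrB; apply: eq_bigr => s _; rewrite mulrBl. Qed.

Lemma ip_cst p c : is_dist p -> ip p (fun _ => c) = c.
Proof. by case=> _ p1; rewrite /ip -big_distrl /= p1 mul1r. Qed.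

Lemma ler_ip p v w :
  (forall s, 0 <= p s) -> (forall s, v s <= w s) -> ip p v <= ip p w.
Proof. by move=> p0 vw; apply: ler_sum => s _; apply: ler_wpM2l. Qed.

Lemma normr_ip_le p v b :
  is_dist p -> (forall s, `|v s| <= b) -> `|ip p v| <= b.
Proof.
move=> [p0 p1] vb; apply: le_trans (ler_norm_sum _ _ _) _.
rewrite -[leRHS](ip_cst b (conj p0 p1)).
by apply: ler_sum => s _; rewrite normrM ger0_norm // ler_wpM2l.
Qed.

End InnerProduct.

Section SupNorm.
Variables (R : realType) (S : finType).
Implicit Types v w : S -> R.

Lemma supnorm_ge0 v : 0 <= supnorm v.
Proof. by rewrite /supnorm; elim/big_ind: _ => // x y x0 y0; rewrite le_max x0. Qed.

Lemma ler_supnorm v s : `|v s| <= supnorm v.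
Proof. exact: (le_bigmax 0 (fun s => `|v s|) s). Qed.

Lemma supnorm_le v b : 0 <= b -> (forall s, `|v s| <= b) -> supnorm v <= b.
Proof. by move=> b0 vb; apply: bigmax_le => // s _; apply: vb. Qed.

Lemma contraction_fixpoint_unique (gamma : R) (F : (S -> R) -> S -> R) v w :
  gamma < 1 ->
  (forall v1 v2, supnorm (fun s => F v1 s - F v2 s)
                 <= gamma * supnorm (fun s => v1 s - v2 s)) ->
  (forall s, F v s = v s) -> (forall s, F w s = w s) -> v = w.
Proof.
move=> gamma_lt1 F_contr Fv Fw.
have vw_le : supnorm (fun s => v s - w s) <= gamma * supnorm (fun s => v s - w s).
  by have := F_contr v w; under eq_fun do rewrite Fv Fw.
have vw0 : supnorm (fun s => v s - w s) <= 0.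
  by have := supnorm_ge0 (fun s => v s - w s); nra.
apply/funext => s; apply/eqP; rewrite -subr_eq0 -normr_le0.
exact: le_trans (ler_supnorm _ s) vw0.
Qed.

End SupNorm.

Section AttainedExtrema.
Variables (R : realType) (E : set R) (x : R).
Hypothesis Ex : E x.

Lemma sup_eq_max : ubound E x -> sup E = x.
Proof.
move=> ubx; apply/le_anti; rewrite ge_sup //=; last by exists x.
by apply: ub_le_sup => //; exists x.
Qed.

Lemma inf_eq_min : lbound E x -> inf E = x.
Proof.
move=> lbx; apply/le_anti; rewrite lb_le_inf ?andbT //; last by exists x.
by apply: ge_inf => //; exists x.
Qed.

End AttainedExtrema.

Section FiniteSup.
Variables (R : realType) (I : finType) (i0 : I).
Implicit Types F G : I -> R.

Lemma sup_fin_attained F :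
  exists i, sup [set F j | j in [set: I]] = F i /\ forall j, F j <= F i.
Proof.
have [i _ Fmax] := @arg_maxP _ R _ i0 xpredT F isT.
exists i; split=> [|j]; last exact: Fmax.
by apply: sup_eq_max => [|_ [j _ <-]]; [exists i | apply: Fmax].
Qed.

Lemma le_sup_fin F G : (forall i, F i <= G i) ->
  sup [set F i | i in [set: I]] <= sup [set G i | i in [set: I]].
Proof.
move=> FG; have [i [-> _]] := sup_fin_attained F.
have [j [-> Gmax]] := sup_fin_attained G.
exact: le_trans (FG i) (Gmax i).
Qed.

Lemma sup_finDr F G c : (forall i, G i = F i + c) ->
  sup [set G i | i in [set: I]] = sup [set F i | i in [set: I]] + c.
Proof.
move=> GF; have [i [-> Fmax]] := sup_fin_attained F.
rewrite -GF; apply: sup_eq_max => [|_ [j _ <-]]; first by exists i.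
by rewrite !GF lerD2r.
Qed.

Lemma normr_sup_fin_sub_le F G N : (forall i, `|F i - G i| <= N) ->
  `|sup [set F i | i in [set: I]] - sup [set G i | i in [set: I]]| <= N.
Proof.
move=> FG; have [i [-> Fmax]] := sup_fin_attained F.
have [j [-> Gmax]] := sup_fin_attained G.
move: (FG i) (FG j) (Fmax j) (Gmax i); rewrite !ler_norml.
by move=> /andP[? ?] /andP[? ?] ? ?; apply/andP; split; lra.
Qed.

End FiniteSup.

Section StateDistribution.
Variables (R : realType) (S A : finType) (K : nat -> tkernel R S A).
Variables (pi : S -> A) (s0 : S).

Lemma ip_sdist0 (w : S -> R) : ip (sdist K pi s0 0) w = w s0.
Proof.
rewrite /ip /= (bigD1 s0) //= eqxx mul1r big1 ?addr0 // => s /negbTE ->.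
by rewrite mul0r.
Qed.

Lemma ip_sdistS t (w : S -> R) :
  ip (sdist K pi s0 t.+1) w = ip (sdist K pi s0 t) (fun s => ip (K t s (pi s)) w).
Proof.
rewrite /ip /=; under eq_bigr do rewrite mulr_suml.
rewrite exchange_big; apply: eq_bigr => s _; rewrite mulr_sumr.
by apply: eq_bigr => s' _; rewrite mulrA.
Qed.

Lemma sdist_is_dist t :
  (forall t s a, is_dist (K t s a)) -> is_dist (sdist K pi s0 t).
Proof.
move=> Kdist; elim: t => [|t [d0 d1]].
  split=> [s|] /=; first by case: (s == s0).
  by rewrite (bigD1 s0) //= eqxx big1 ?addr0 // => s /negbTE ->.
split=> [s'|] /=.
  by apply: sumr_ge0 => s _; rewrite mulr_ge0 //; case: (Kdist t s (pi s)).
rewrite exchange_big -d1; apply: eq_bigr => s _.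
by rewrite -mulr_sumr; case: (Kdist t s (pi s)) => _ ->; rewrite mulr1.
Qed.

End StateDistribution.

Section DiscountedReturn.
Variables (R : realType) (S A : finType) (gamma : R) (K : nat -> tkernel R S A).
Variables (pi : S -> A) (u : S -> A -> R) (s0 : S) (Ub : R).
Hypotheses (gamma_ge0 : 0 <= gamma) (gamma_lt1 : gamma < 1) (Ub_ge0 : 0 <= Ub).
Hypotheses (Kdist : forall t s a, is_dist (K t s a)) (u_bnd : forall s a, 0 <= u s a <= Ub).

Definition partial_return n :=
  \sum_(0 <= t < n) gamma ^+ t * ip (sdist K pi s0 t) (fun s => u s (pi s)).

Lemma partial_return_telescope (W : nat -> S -> R) n :
  partial_return n + gamma ^+ n * ip (sdist K pi s0 n) (W n) - W 0%N s0 =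
  \sum_(0 <= t < n) gamma ^+ t * ip (sdist K pi s0 t)
     (fun s => u s (pi s) + gamma * ip (K t s (pi s)) (W t.+1) - W t s).
Proof.
elim: n => [|n IHn]; first by rewrite /partial_return !big_geq // mul1r ip_sdist0 add0r subrr.
rewrite {1}/partial_return !big_nat_recr //= -/(partial_return n) -IHn.
by rewrite ipB ipD ipZ ip_sdistS exprS; ring.
Qed.

Lemma expected_reward_bounds t :
  0 <= ip (sdist K pi s0 t) (fun s => u s (pi s)) <= Ub.
Proof.
have [d0 d1] := sdist_is_dist pi s0 t Kdist.
rewrite -[X in _ <= _ <= X](@ip_cst _ _ _ Ub (conj d0 d1)) -(ip0 (sdist K pi s0 t)).
by rewrite !ler_ip // => s; case/andP: (u_bnd s (pi s)).
Qed.

Lemma partial_return_nondecreasing : nondecreasing_seq partial_return.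
Proof.
apply/nondecreasing_seqP => n; rewrite /partial_return big_nat_recr //= lerDl.
by rewrite mulr_ge0 ?exprn_ge0 //; case/andP: (expected_reward_bounds n).
Qed.

(* [Ub / (1 - gamma)] bounds the discounted return of every tail. *)
Lemma partial_return_tail n k :
  partial_return (n + k) + gamma ^+ (n + k) * (Ub / (1 - gamma))
  <= partial_return n + gamma ^+ n * (Ub / (1 - gamma)).
Proof.
have tailC : Ub + gamma * (Ub / (1 - gamma)) = Ub / (1 - gamma).
  by field; rewrite subr_eq0 eq_sym lt_eqF.
elim: k => [|k IHk]; first by rewrite addn0.
apply: le_trans IHk; rewrite addnS /partial_return big_nat_recr //= exprS -addrA lerD2l.
rewrite -mulrA mulrCA -mulrDr ler_wpM2l ?exprn_ge0 // -[leRHS]tailC lerD2r.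
by case/andP: (expected_reward_bounds (n + k)).
Qed.

Lemma partial_return_le n : partial_return n <= Ub / (1 - gamma).
Proof.
have := partial_return_tail 0 n.
have -> : partial_return 0 = 0 by rewrite /partial_return big_geq.
rewrite add0n expr0 mul1r add0r.
apply: le_trans; rewrite lerDl mulr_ge0 ?exprn_ge0 ?divr_ge0 //.
by rewrite subr_ge0 ltW.
Qed.

Lemma disc_return_sup : disc_return gamma K pi u s0 = sup (range partial_return).
Proof.
apply/cvg_lim => //; apply: nondecreasing_cvgn partial_return_nondecreasing _.
by exists (Ub / (1 - gamma)) => _ [n _ <-]; apply: partial_return_le.
Qed.

Lemma disc_return_bounds n :
  partial_return n <= disc_return gamma K pi u s0
  <= partial_return n + gamma ^+ n * (Ub / (1 - gamma)).
Proof.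
have C0 : 0 <= gamma ^+ n * (Ub / (1 - gamma)).
  by rewrite mulr_ge0 ?exprn_ge0 ?divr_ge0 // subr_ge0 ltW.
rewrite disc_return_sup; apply/andP; split.
  apply: ub_le_sup; last by exists n.
  by exists (Ub / (1 - gamma)) => _ [k _ <-]; apply: partial_return_le.
apply: ge_sup => [|_ [k _ <-]]; first by exists (partial_return 0), 0%N.
have [kn|nk] := leqP k n.
  by apply: le_trans (partial_return_nondecreasing kn) _; rewrite lerDl.
have := partial_return_tail n (k - n); rewrite subnKC; last exact: ltnW.
by apply: le_trans; rewrite lerDl mulr_ge0 ?exprn_ge0 ?divr_ge0 // subr_ge0 ltW.
Qed.

End DiscountedReturn.

Section WorstCaseExpectation.
Variables (R : realType) (S A : finType) (Po : tkernel R S A).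
Variables (D : (S -> R) -> (S -> R) -> R) (beta : S -> A -> R).

Definition worst_ip s a (w : S -> R) := inf [set ip P w | P in Pset Po D beta s a].

Lemma worst_ipE s a w P : Pset Po D beta s a P ->
  (forall Q, Pset Po D beta s a Q -> ip P w <= ip Q w) -> worst_ip s a w = ip P w.
Proof. by move=> PP Pmin; apply: inf_eq_min => [|_ [Q PQ <-]]; [exists P | apply: Pmin]. Qed.

Hypothesis Pset_min : forall s a (w : S -> R), exists2 P, Pset Po D beta s a P &
  forall Q, Pset Po D beta s a Q -> ip P w <= ip Q w.

Lemma rmin_worst_ip s a w :
  rmin Po D beta s a w = worst_ip s a w - ip (Po s a) w.
Proof.
have [P PP Pmin] := Pset_min s a w.
rewrite (worst_ipE PP Pmin); apply: inf_eq_min => [|_ [Q PQ <-]].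
  by exists P; rewrite // ipBl.
by rewrite ipBl lerD2r Pmin.
Qed.

Lemma worst_ip_le s a w P : Pset Po D beta s a P -> worst_ip s a w <= ip P w.
Proof.
have [P0 PP0 P0min] := Pset_min s a w.
by rewrite (worst_ipE PP0 P0min); apply: P0min.
Qed.

Lemma le_worst_ip s a (v w : S -> R) :
  (forall s', v s' <= w s') -> worst_ip s a v <= worst_ip s a w.
Proof.
move=> vw; have [P PP Pmin] := Pset_min s a w; have [[P0 _] _] := PP.
by rewrite [leRHS](worst_ipE PP Pmin); apply: le_trans (worst_ip_le v PP) (ler_ip P0 vw).
Qed.

Lemma worst_ipDr s a w c :
  worst_ip s a (fun s' => w s' + c) = worst_ip s a w + c.
Proof.
have [P PP Pmin] := Pset_min s a w; have [Pdist _] := PP.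
have Pmin' Q : Pset Po D beta s a Q ->
    ip P (fun s' => w s' + c) <= ip Q (fun s' => w s' + c).
  by move=> PQ; have [Qdist _] := PQ; rewrite !ipD !ip_cst // lerD2r Pmin.
by rewrite (worst_ipE PP Pmin') (worst_ipE PP Pmin) ipD ip_cst.
Qed.

Lemma exists_worst_kernels (w : nat -> S -> R) :
  exists2 K : nat -> tkernel R S A, forall t, in_unc Po D beta (K t) &
    forall t s a, ip (K t s a) (w t) = worst_ip s a (w t).
Proof.
have /choice[K KP] : forall x : nat * S * A, exists P,
    Pset Po D beta x.1.2 x.2 P /\ worst_ip x.1.2 x.2 (w x.1.1) = ip P (w x.1.1).
  move=> [[t s] a]; have [P PP Pmin] := Pset_min s a (w t).
  by exists P; rewrite (worst_ipE PP Pmin).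
by exists (fun t s a => K (t, s, a)) => [t s a | t s a]; case: (KP (t, s, a)).
Qed.

End WorstCaseExpectation.

Lemma eq0_of_geometric_bound (R : realType) (gamma e C : R) :
  0 <= gamma -> gamma < 1 -> (forall n, `|e| <= gamma ^+ n * C) -> e = 0.
Proof.
move=> gamma_ge0 gamma_lt1 e_le.
have geo0 : (fun n => gamma ^+ n * C) @ \oo --> 0.
  by rewrite -(mul0r C); apply: cvgMl; apply: cvg_expr; rewrite ger0_norm.
apply/normr0_eq0/le_anti; rewrite normr_ge0 andbT -(cvg_lim _ geo0) //.
by apply: limr_ge; [apply/cvg_ex; exists 0 | near=> n; apply: e_le].
Unshelve. all: by end_near.
Qed.

Section RobustValue.
Variables (R : realType) (S A : finType) (Po : tkernel R S A).
Variables (D : (S -> R) -> (S -> R) -> R) (beta : S -> A -> R).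
Variables (gamma : R) (pi : S -> A) (u : S -> A -> R) (Ub : R).
Hypothesis Pset_min : forall s a (w : S -> R), exists2 P, Pset Po D beta s a P &
  forall Q, Pset Po D beta s a Q -> ip P w <= ip Q w.
Hypotheses (gamma_ge0 : 0 <= gamma) (gamma_lt1 : gamma < 1) (Ub_ge0 : 0 <= Ub).
Hypothesis u_bnd : forall s a, 0 <= u s a <= Ub.

Definition robust_bellman (w : S -> R) : S -> R :=
  fun s => u s (pi s) + gamma * worst_ip Po D beta s (pi s) w.

Definition finite_robust_value n := iter n robust_bellman (fun _ => 0).

Lemma robust_bellman_le v w :
  (forall s, v s <= w s) -> forall s, robust_bellman v s <= robust_bellman w s.
Proof. by move=> vw s; rewrite lerD2l ler_wpM2l // le_worst_ip. Qed.

Lemma robust_bellmanDr w c s :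
  robust_bellman (fun s' => w s' + c) s = robust_bellman w s + gamma * c.
Proof. by rewrite /robust_bellman worst_ipDr // mulrDr addrA. Qed.

Lemma partial_return_sub_finite_robust_value K n s0 :
  partial_return gamma K pi u s0 n - finite_robust_value n s0 =
  \sum_(0 <= t < n) gamma ^+ t * ip (sdist K pi s0 t)
    (fun s => gamma * (ip (K t s (pi s)) (finite_robust_value (n - t.+1))
                       - worst_ip Po D beta s (pi s) (finite_robust_value (n - t.+1)))).
Proof.
have := partial_return_telescope gamma K pi u s0
          (fun t => finite_robust_value (n - t)) n.
rewrite subnn subn0 [finite_robust_value 0]/= ip0 mulr0 addr0 => ->.
apply: eq_big_nat => t /andP[_ tn]; congr (_ * ip _ _); apply/funext => s.
by rewrite -(subnSK tn) /= /robust_bellman; ring.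
Qed.

Lemma finite_robust_value_le_partial_return K n s0 :
  (forall t, in_unc Po D beta (K t)) ->
  finite_robust_value n s0 <= partial_return gamma K pi u s0 n.
Proof.
move=> K_unc; have Kdist t s a : is_dist (K t s a) by case: (K_unc t s a).
rewrite -subr_ge0 partial_return_sub_finite_robust_value.
apply: sumr_ge0 => t _; rewrite mulr_ge0 ?exprn_ge0 // -(ip0 (sdist K pi s0 t)).
apply: ler_ip => s; first exact: (sdist_is_dist pi s0 t Kdist).1.
by rewrite mulr_ge0 // subr_ge0; apply/worst_ip_le/K_unc.
Qed.

Lemma partial_return_worst_kernels n s0 :
  exists2 K : nat -> tkernel R S A, forall t, in_unc Po D beta (K t) &
    partial_return gamma K pi u s0 n = finite_robust_value n s0.
Proof.
have [K K_unc K_worst] :=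
  exists_worst_kernels Pset_min (fun t => finite_robust_value (n - t.+1)).
exists K => //; apply/eqP; rewrite -subr_eq0 partial_return_sub_finite_robust_value.
rewrite big1 // => t _; under eq_fun do rewrite K_worst subrr mulr0.
by rewrite ip0 mulr0.
Qed.

Lemma robust_value_bounds n s0 :
  finite_robust_value n s0 <= robust_value gamma Po D beta pi u s0
  <= finite_robust_value n s0 + gamma ^+ n * (Ub / (1 - gamma)).
Proof.
have [Kw Kw_unc Kw_ret] := partial_return_worst_kernels n s0.
have Kdist (K : nat -> tkernel R S A) :
    (forall t, in_unc Po D beta (K t)) -> forall t s a, is_dist (K t s a).
  by move=> K_unc t s a; case: (K_unc t s a).
have lb : lbound [set disc_return gamma K pi u s0 | K in
            [set K | forall t, in_unc Po D beta (K t)]] (finite_robust_value n s0).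
  move=> _ [K K_unc <-].
  apply: le_trans (finite_robust_value_le_partial_return n s0 K_unc) _.
  by case/andP: (disc_return_bounds pi s0 gamma_ge0 gamma_lt1 Ub_ge0 (Kdist K K_unc) u_bnd n).
rewrite /robust_value lb_le_inf //=; last by exists (disc_return gamma Kw pi u s0), Kw.
apply: le_trans (_ : disc_return gamma Kw pi u s0 <= _).
  by apply: ge_inf; [exists (finite_robust_value n s0) | exists Kw].
rewrite -Kw_ret.
by case/andP: (disc_return_bounds pi s0 gamma_ge0 gamma_lt1 Ub_ge0 (Kdist Kw Kw_unc) u_bnd n).
Qed.

Lemma robust_value_bellman s :
  robust_value gamma Po D beta pi u s = robust_bellman (robust_value gamma Po D beta pi u) s.
Proof.
apply/eqP; rewrite -subr_eq0; apply/eqP.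
apply: (@eq0_of_geometric_bound _ gamma _ (gamma * (Ub / (1 - gamma)))) => // n.
have V_lo s' := proj1 (andP (robust_value_bounds n s')).
have V_hi s' := proj2 (andP (robust_value_bounds n s')).
have BV_lo := robust_bellman_le V_lo s.
have := robust_bellman_le V_hi s; rewrite robust_bellmanDr => BV_hi.
have /andP[V_lo' V_hi'] := robust_value_bounds n.+1 s.
have finS : finite_robust_value n.+1 s = robust_bellman (finite_robust_value n) s by [].
rewrite finS exprS -mulrA in V_lo' V_hi'.
by rewrite mulrCA ler_norml; apply/andP; split; lra.
Qed.

End RobustValue.

Section PolicyOperators.
Context {R : realType} {S A : finType} {m : nat} {gamma : R} {Po : tkernel R S A}.
Context {D : (S -> R) -> (S -> R) -> R} {beta : S -> A -> R}.
Context {r : S -> A -> R} {g : 'I_m -> S -> A -> R} {lam : 'I_m -> R}.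
Hypotheses (gamma_ge0 : 0 <= gamma) (Po_dist : forall s a, is_dist (Po s a)).

Local Notation T := (Tpi gamma Po D beta r g lam).
Local Notation Ts := (Tstar gamma Po D beta r g lam).

Lemma Tpi_affine pi v s : T pi v s = T pi (fun _ => 0) s + gamma * ip (Po s (pi s)) v.
Proof. by rewrite /Tpi ip0; ring. Qed.

Lemma Tpi_le pi v1 v2 : (forall s, v2 s <= v1 s) -> forall s, T pi v2 s <= T pi v1 s.
Proof.
move=> v21 s; rewrite [leLHS]Tpi_affine [leRHS]Tpi_affine lerD2l ler_wpM2l //.
by apply: ler_ip => // s'; case: (Po_dist s (pi s)).
Qed.

Lemma TpiDr pi v c s : T pi (fun s' => v s' + c) s = T pi v s + gamma * c.
Proof. by rewrite Tpi_affine [T pi v s]Tpi_affine ipD ip_cst // mulrDr addrA. Qed.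

Lemma normr_Tpi_sub_le pi v1 v2 s :
  `|T pi v1 s - T pi v2 s| <= gamma * supnorm (fun s => v1 s - v2 s).
Proof.
rewrite Tpi_affine [T pi v2 s]Tpi_affine opprD addrACA subrr add0r -mulrBr -ipB.
rewrite normrM ger0_norm // ler_wpM2l //.
by apply: normr_ip_le => // s'; apply: ler_supnorm.
Qed.

Lemma supnorm_Tpi_sub_le pi v1 v2 :
  supnorm (fun s => T pi v1 s - T pi v2 s) <= gamma * supnorm (fun s => v1 s - v2 s).
Proof.
by apply: supnorm_le => [|s]; [rewrite mulr_ge0 ?supnorm_ge0 | apply: normr_Tpi_sub_le].
Qed.

Variable pi0 : {ffun S -> A}.

Lemma Tstar_le v1 v2 : (forall s, v2 s <= v1 s) -> forall s, Ts v2 s <= Ts v1 s.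
Proof. by move=> v21 s; apply: le_sup_fin pi0 _ _ _ => pi; apply: Tpi_le. Qed.

Lemma TstarDr v c s : Ts (fun s' => v s' + c) s = Ts v s + gamma * c.
Proof. by apply: sup_finDr pi0 _ _ _ _ => pi; apply: TpiDr. Qed.

Lemma supnorm_Tstar_sub_le v1 v2 :
  supnorm (fun s => Ts v1 s - Ts v2 s) <= gamma * supnorm (fun s => v1 s - v2 s).
Proof.
apply: supnorm_le => [|s]; first by rewrite mulr_ge0 ?supnorm_ge0.
by apply: normr_sup_fin_sub_le pi0 _ _ _ _ => pi; apply: normr_Tpi_sub_le.
Qed.

Lemma Tpi_robust_value_fixed Rbar tau pi s :
  (forall s a (w : S -> R), exists2 P, Pset Po D beta s a P &
     forall Q, Pset Po D beta s a Q -> ip P w <= ip Q w) ->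
  gamma < 1 -> (forall s a, 0 <= r s a <= Rbar) ->
  (forall i s a, 0 <= g i s a <= tau i) ->
  let Vl := fun s => robust_value gamma Po D beta pi r s
                     - \sum_(i < m) lam i * robust_value gamma Po D beta pi (g i) s in
  T pi Vl s = Vl s.
Proof.
move=> Pset_min gamma_lt1 r_bnd g_bnd Vl.
(* [Ub] may be negative when [S] or [A] is empty, hence [`|Ub|]. *)
have bellman (u : S -> A -> R) Ub : (forall s a, 0 <= u s a <= Ub) ->
    robust_value gamma Po D beta pi u s
    = u s (pi s) + gamma * worst_ip Po D beta s (pi s) (robust_value gamma Po D beta pi u).
  move=> u_bnd; apply: (@robust_value_bellman _ _ _ _ _ _ _ _ _ `|Ub|) => // s' a.
  by have /andP[u0 uUb] := u_bnd s' a; rewrite u0 (le_trans uUb (ler_norm Ub)).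
have sums : \sum_(i < m) lam i * g i s (pi s)
    + gamma * \sum_(i < m) lam i * ip (Po s (pi s)) (robust_value gamma Po D beta pi (g i))
    + gamma * \sum_(i < m)
                lam i * rmin Po D beta s (pi s) (robust_value gamma Po D beta pi (g i))
    = \sum_(i < m) lam i * robust_value gamma Po D beta pi (g i) s.
  rewrite !mulr_sumr -!big_split /=; apply: eq_bigr => i _.
  by rewrite rmin_worst_ip // (bellman _ _ (g_bnd i)); ring.
rewrite /Tpi /Vl ipB ip_sum rmin_worst_ip // (bellman _ _ r_bnd) -sums; ring.
Qed.

End PolicyOperators.

Theorem proposition3 (R : realType) (S A : finType) (m : nat) (gamma : R)
  (Po : tkernel R S A) (D : (S -> R) -> (S -> R) -> R) (beta : S -> A -> R)
  (r : S -> A -> R) (Rbar : R) (g : 'I_m -> S -> A -> R) (tau : 'I_m -> R)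
  (lam : 'I_m -> R)
  (hA : (0 < #|A|)%N)
  (hgamma : 0 <= gamma < 1)
  (hPo : forall s a, is_dist (Po s a))
  (hmin : forall s a (w : S -> R), exists2 P, Pset Po D beta s a P &
            forall Q, Pset Po D beta s a Q -> ip P w <= ip Q w)
  (hr : forall s a, 0 <= r s a <= Rbar)
  (hg : forall i s a, 0 <= g i s a <= tau i)
  (hlam : forall i, 0 <= lam i) :
  let T := Tpi gamma Po D beta r g lam in
  let Ts := Tstar gamma Po D beta r g lam in
  (* (1) monotonicity *)
  (forall (v1 v2 : S -> R), (forall s, v2 s <= v1 s) ->
     (forall (pi : {ffun S -> A}) s, T pi v2 s <= T pi v1 s) /\
     (forall s, Ts v2 s <= Ts v1 s)) /\
  (* (2) translation invariance *)
  (forall (v : S -> R) (c : R),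
     (forall (pi : {ffun S -> A}) s,
        T pi (fun s' => v s' + c) s = T pi v s + gamma * c) /\
     (forall s, Ts (fun s' => v s' + c) s = Ts v s + gamma * c)) /\
  (* (3) contraction and unique fixed point *)
  (forall (v1 v2 : S -> R),
     (forall (pi : {ffun S -> A}),
        supnorm (fun s => T pi v1 s - T pi v2 s) <= gamma * supnorm (fun s => v1 s - v2 s)) /\
     supnorm (fun s => Ts v1 s - Ts v2 s) <= gamma * supnorm (fun s => v1 s - v2 s)) /\
  (forall (pi : {ffun S -> A}),
     let Vl := fun s => robust_value gamma Po D beta pi r s
                        - \sum_(i < m) lam i * robust_value gamma Po D beta pi (g i) s in
     (forall s, T pi Vl s = Vl s) /\
     (forall v : S -> R, (forall s, T pi v s = v s) -> v = Vl)).
Proof.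
move=> T Ts; have /andP[gamma_ge0 gamma_lt1] := hgamma.
have /card_gt0P[a0 _] := hA; pose pi0 : {ffun S -> A} := [ffun=> a0].
split; [|split; [|split]].
- move=> v1 v2 v21; split=> [pi|]; first exact: Tpi_le.
  exact: Tstar_le gamma_ge0 hPo pi0 _ _ v21.
- move=> v c; split=> [pi s|s]; first exact: TpiDr.
  exact: TstarDr hPo pi0 v c s.
- move=> v1 v2; split=> [pi|]; first exact: supnorm_Tpi_sub_le.
  exact: supnorm_Tstar_sub_le gamma_ge0 hPo pi0 v1 v2.
move=> pi Vl; have Vl_fixed s : T pi Vl s = Vl s.
  exact (Tpi_robust_value_fixed gamma_ge0 pi s hmin gamma_lt1 hr hg).
split=> // v v_fixed.
exact: contraction_fixpoint_unique gamma_lt1 (supnorm_Tpi_sub_le gamma_ge0 hPo pi) v_fixed Vl_fixed.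
Qed.
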